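(* For every $l\ge1$ and every positive integer $K$, and every $\varepsilon>0$, for all sufficiently large $n$ we have $f(n)\ge f_q(n)\ge (c'_{l,K}-\varepsilon)^n$, where $q=p_{l+1}$. Consequently $\liminf_{n\to\infty} f(n)^{1/n}\ge c'_{l,K}$.
   Context: A set of positive integers is primitive if no element divides another. $f(n)$ is the number of $n$-element primitive subsets of $\{1,\dots,2n\}$, and $f_q(n)$ is the number of $n$-element primitive subsets of $(2n/q,2n]\cap\mathbb Z$. Let $p_1<p_2<\dots$ be the primes and $q=p_{l+1}$. $M_l$ is the set of positive integers all of whose prime factors lie in $\{p_1,\dots,p_l\}$, $M_l(x)=\{m\in M_l:m\le x\}$ ordered by divisibility. $r'_l(i)$ is the number of maximum-size antichains of $M_l(i)$ all of whose elements lie in $(i/q,i]$, and $c'_{l,K}=\prod_{i=1}^K r'_l(i)^{\frac{2}{i(i+1)}\prod_{j=1}^l(1-1/p_j)}$. *)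

From Stdlib Require Import Reals.
From mathcomp Require Import all_boot.

Set Implicit Arguments.
Unset Strict Implicit.
Unset Printing Implicit Defensive.

(* ---------- primes, 0-indexed: nthp 0 = 2, nthp 1 = 3, ... ----------
   So p_j (1-indexed, as in the paper) = nthp (j-1), the first l primes are
   nthp 0, ..., nthp (l-1), and q = p_{l+1} = nthp l. *)
Lemma exists_prime_above (m : nat) : exists p, (m < p) && prime p.
Proof. case: (prime_above m) => p H1 H2; exists p; by rewrite H1 H2. Qed.

Definition next_prime (m : nat) : nat := ex_minn (exists_prime_above m).

Fixpoint nthp (k : nat) : nat :=
  match k with
  | 0 => 2
  | k'.+1 => next_prime (nthp k')
  end.

Definition primitive_set (N : nat) (A : {set 'I_N.+1}) : bool :=
  [forall x in A, 0 < (x : nat)] &&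
  [forall x in A, forall y in A, (x != y) ==> ~~ ((x : nat) %| y)].

Definition prim_count (N : nat) (P : nat -> bool) (k : nat) : nat :=
  #|[set A : {set 'I_N.+1} |
      [&& primitive_set A, #|A| == k & [forall x in A, P x]]]|.

Definition fP (n : nat) : nat := prim_count n.*2 (fun _ => true) n.

(* f_q(n): n-element primitive subsets of (2n/q, 2n] ∩ Z;
   for integer m, 2n/q < m  <->  2n < q*m  (q > 0). *)
Definition fqP (q n : nat) : nat := prim_count n.*2 (fun m => n.*2 < q * m) n.

Definition inM (l m : nat) : bool :=
  (0 < m) && all (fun p => has (fun j => p == nthp j) (iota 0 l)) (primes m).

Definition antichainM (l i : nat) (A : {set 'I_i.+1}) : bool :=
  [forall x in A, inM l x] &&
  [forall x in A, forall y in A, (x != y) ==> ~~ ((x : nat) %| y)].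

Definition max_antichain_size (l i : nat) : nat :=
  \max_(A : {set 'I_i.+1} | antichainM l A) #|A|.

Definition r' (l i : nat) : nat :=
  #|[set A : {set 'I_i.+1} |
      [&& antichainM l A, #|A| == max_antichain_size l i &
          [forall x in A, i < nthp l * x]]]|.

Local Open Scope R_scope.

(* x^y for x >= 0 and y > 0, with the convention 0^y = 0
   (Stdlib's Rpower would give 0^y = 1). *)
Definition rpow0 (x y : R) : R :=
  if Req_EM_T x 0 then 0 else Rpower x y.

Fixpoint prodR1 (F : nat -> R) (n : nat) : R :=
  match n with
  | O => 1
  | S k => prodR1 F k * F (S k)
  end.

Definition euler_factor (l : nat) : R :=
  prodR1 (fun j => 1 - / INR (nthp (j - 1))) l.

Definition c' (l K : nat) : R :=
  prodR1 (fun i => rpow0 (INR (r' l i))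
                         (2 / (INR i * (INR i + 1)) * euler_factor l)) K.

From Stdlib Require Import Reals Lra.
From mathcomp Require Import all_boot zify.

Set Implicit Arguments.
Unset Strict Implicit.
Unset Printing Implicit Defensive.

(* Every positive integer factors uniquely as [a * b] with [a] in [M_l] and [b]
   free of the first [l] primes, so that every prime factor of [b] is at least
   [q = p_(l+1)].  For each such [b <= 2n] choose a maximum antichain of
   [M_l(2n/b)] inside [(2n/(qb), 2n/b]]; the products [a * b] form a primitive
   subset of [(2n/q, 2n]]: if [a b | a' b'] then [a | a'] and [b | b'], and
   [b <> b'] forces [b' >= q b], whence [a' b' >= q a b > 2n].  A maximum
   antichain of [M_l(i)] has the size of the upper half [(i/2, i]] of [M_l(i)]
   (push each element into it by a power of 2), so the glued set always has as
   many elements as the one glued from upper halves, which is [(n, 2n]].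
   Distinct choices glue to distinct sets, hence
   [f_q(n) >= prod_b r'_l(2n/b)].  About [2n prod_j (1 - 1/p_j) / (i(i+1))]
   of the [b] satisfy [2n/b = i], with an error of at most twice the primorial
   of [l], so [c'_(l,K)^n <= C f_q(n)] for a constant [C], and taking [n]-th
   roots concludes. *)

Lemma next_primeP m : m < next_prime m /\ prime (next_prime m).
Proof. by rewrite /next_prime; case: ex_minnP => p /andP[]. Qed.

Lemma next_prime_min m p : m < p -> prime p -> next_prime m <= p.
Proof. by move=> mp pp; rewrite /next_prime; case: ex_minnP => x _; apply; rewrite mp. Qed.

Lemma nthp_prime k : prime (nthp k).
Proof. by case: k => [|k] //=; case: (next_primeP (nthp k)). Qed.

Lemma nthp_gt1 k : 1 < nthp k.
Proof. exact: prime_gt1 (nthp_prime k). Qed.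

Lemma ltn_nthp j k : j < k -> nthp j < nthp k.
Proof.
apply: (homo_ltn (f := nthp) (r := fun a b => a < b)) => [? ? ?|i].
  exact: ltn_trans.
by case: (next_primeP (nthp i)).
Qed.

Definition firstp (l : nat) : nat_pred := [pred p | has (fun j => p == nthp j) (iota 0 l)].

Lemma firstpS l p : (p \in firstp l.+1) = (p \in firstp l) || (p == nthp l).
Proof. by rewrite !inE -addn1 iotaD has_cat /= orbF. Qed.

Lemma nthp_firstp j l : j < l -> nthp j \in firstp l.
Proof. by move=> jl; apply/hasP; exists j; rewrite ?mem_iota. Qed.

Lemma nthp_notin_firstp l : nthp l \notin firstp l.
Proof.
apply/hasP => -[j]; rewrite mem_iota add0n => /andP[_ /ltn_nthp].
by rewrite ltn_neqAle eq_sym => /andP[/negbTE ->].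
Qed.

Lemma nthp_leq_prime l p : prime p -> p \notin firstp l -> nthp l <= p.
Proof.
move=> pp; elim: l => [|l IHl]; first by rewrite (prime_gt1 pp).
rewrite firstpS negb_or => /andP[/IHl le_lp ne_lp].
by apply: next_prime_min; rewrite // ltn_neqAle eq_sym ne_lp.
Qed.

Lemma firstp'_nat_ge l c : (firstp l)^'.-nat c -> 1 < c -> nthp l <= c.
Proof.
move=> pc c_gt1; have c_gt0 := ltnW c_gt1.
have pdiv_notin : pdiv c \in (firstp l)^'.
  by apply: (pnatP _ c_gt0 pc); rewrite ?pdiv_prime ?pdiv_dvd.
apply: leq_trans (nthp_leq_prime (pdiv_prime c_gt1) pdiv_notin) _.
exact: dvdn_leq c_gt0 (pdiv_dvd c).
Qed.

Lemma pnat_gt0 (pi : nat_pred) n : pi.-nat n -> 0 < n.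
Proof. by case/andP. Qed.

Lemma proper_dvdn_double x y : x %| y -> 0 < y -> x != y -> 2 * x <= y.
Proof.
case/dvdnP => -[|[|k]] -> //; first by rewrite mul1n eqxx.
by rewrite leq_mul2r orbT.
Qed.

Lemma mul_pow2_dvdn_total a b m n : a * 2 ^ m = b * 2 ^ n -> a %| b \/ b %| a.
Proof.
wlog le_mn : a b m n / m <= n => [hwlog|].
  by case: (leqP m n) => [/hwlog h /h | /ltnW /hwlog h /esym /h []]; auto.
rewrite -(subnK le_mn) expnD mulnA => /eqP; rewrite eqn_pmul2r ?expn_gt0 // => /eqP ->.
by right; rewrite dvdn_mulr.
Qed.

Definition upper_half l i : {set 'I_i.+1} :=
  [set a : 'I_i.+1 | (firstp l).-nat a & i < 2 * a].

Lemma upper_half_antichain l i : antichainM l (upper_half l i).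
Proof.
apply/andP; split; apply/forallP => x; apply/implyP; rewrite inE => /andP[px ix] //.
apply/forallP => y; apply/implyP; rewrite inE => /andP[py iy]; apply/implyP => ne_xy.
apply/negP => /proper_dvdn_double /(_ (pnat_gt0 py) ne_xy).
by move/(leq_trans ix); rewrite ltnNge -ltnS ltn_ord.
Qed.

Section DoublingMap.

Variables (l i : nat).
Hypothesis l_gt0 : 0 < l.

Let double_up (a : nat) := a * 2 ^ trunc_log 2 (i %/ a).

Lemma double_up_upper_half (a : 'I_i.+1) : (firstp l).-nat a ->
  [/\ double_up a <= i, i < 2 * double_up a & (firstp l).-nat (double_up a)].
Proof.
move=> pa; have a_gt0 := pnat_gt0 pa.
have ia_gt0 : 0 < i %/ a by rewrite divn_gt0 // -ltnS ltn_ord.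
have := trunc_logP (isT : 1 < 2) ia_gt0; have := trunc_log_ltn (i %/ a) (isT : 1 < 2).
rewrite /double_up mulnC leq_divRL // ltn_divLR // expnS => lt_i le_i.
split; rewrite ?mulnA //.
by rewrite pnatM pnatX pa andbT pnatE ?(nthp_firstp l_gt0 : 2 \in firstp l).
Qed.

Lemma antichain_card_leq_upper_half (A : {set 'I_i.+1}) :
  antichainM l A -> #|A| <= #|upper_half l i|.
Proof.
case/andP=> /forallP inA /forallP antiA.
pose g (a : 'I_i.+1) : 'I_i.+1 := inord (double_up a).
have gE a : a \in A -> g a = double_up a :> nat.
  by move=> aA; rewrite inordK // ltnS; case: (double_up_upper_half (implyP (inA a) aA)).
have g_inj : {in A &, injective g}.
  move=> a b aA bA /(congr1 val); rewrite /= !gE // => /mul_pow2_dvdn_total.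
  have anti x y : x \in A -> y \in A -> (x : nat) %| y -> x = y.
    move=> xA yA; apply: contraTeq => ne_xy.
    by move/implyP: (antiA x) => /(_ xA)/forallP/(_ y)/implyP/(_ yA)/implyP; apply.
  by case=> [/anti -> | /anti ->].
rewrite -(card_in_imset g_inj); apply/subset_leq_card/subsetP => _ /imsetP[a aA ->].
by rewrite inE gE //; case: (double_up_upper_half (implyP (inA a) aA)) => _ -> ->.
Qed.

Lemma max_antichain_sizeE : max_antichain_size l i = #|upper_half l i|.
Proof.
apply/eqP; rewrite eqn_leq; apply/andP; split.
  by apply/bigmax_leqP => A; apply: antichain_card_leq_upper_half.
rewrite /max_antichain_size.
exact: (@leq_bigmax_cond _ (fun A => antichainM l A) (fun A => #|A|) _ (upper_half_antichain l i)).
Qed.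

End DoublingMap.

Lemma partn_pnat_mul (pi : nat_pred) a b : pi.-nat a -> pi^'.-nat b ->
  (a * b)`_pi = a /\ (a * b)`_pi^' = b.
Proof.
move=> pa pb; have [a_gt0 b_gt0] := (pnat_gt0 pa, pnat_gt0 pb).
rewrite !partnM // part_pnat_id // part_p'nat // (part_pnat_id pb) part_p'nat ?pnatNK //.
by rewrite muln1 mul1n.
Qed.

Lemma pnat_mul_inj (pi : nat_pred) a b a' b' : pi.-nat a -> pi^'.-nat b ->
  pi.-nat a' -> pi^'.-nat b' -> a * b = a' * b' -> a = a' /\ b = b'.
Proof.
move=> pa pb pa' pb' eq_ab.
have [ea eb] := partn_pnat_mul pa pb; have [ea' eb'] := partn_pnat_mul pa' pb'.
by split; [rewrite -ea eq_ab ea' | rewrite -eb eq_ab eb'].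
Qed.

Lemma pnat_mul_dvdn (pi : nat_pred) a b a' b' : pi.-nat a -> pi^'.-nat b ->
  pi.-nat a' -> pi^'.-nat b' -> a * b %| a' * b' -> a %| a' /\ b %| b'.
Proof.
move=> pa pb pa' pb' dv_ab.
have ab'_gt0 : 0 < a' * b' by rewrite muln_gt0 (pnat_gt0 pa') (pnat_gt0 pb').
have [ea eb] := partn_pnat_mul pa pb; have [ea' eb'] := partn_pnat_mul pa' pb'.
by split; [rewrite -ea -ea' | rewrite -eb -eb']; apply: partn_dvd.
Qed.

Definition top_antichains l i : {set {set 'I_i.+1}} :=
  [set A | [&& antichainM l A, #|A| == max_antichain_size l i &
              [forall x in A, i < nthp l * x]]].

Lemma r'E l i : r' l i = #|top_antichains l i|.
Proof. by []. Qed.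

Lemma upper_half_top l i : 0 < l -> upper_half l i \in top_antichains l i.
Proof.
move=> l_gt0; rewrite inE upper_half_antichain max_antichain_sizeE // eqxx /=.
apply/forallP => x; apply/implyP; rewrite inE => /andP[_ /leq_trans]; apply.
by rewrite leq_mul2r nthp_gt1 orbT.
Qed.

Lemma r'_gt0 l i : 0 < l -> 0 < r' l i.
Proof.
move=> l_gt0; rewrite r'E card_gt0; apply/set0Pn.
by exists (upper_half l i); apply: upper_half_top.
Qed.

Lemma widen_ord_inj n m (le_nm : n <= m) : injective (widen_ord le_nm).
Proof. by move=> x y /(congr1 val) /= /val_inj. Qed.

Section Gluing.

Variables (l N : nat).
Local Notation pi := (firstp l).
Local Notation q := (nthp l).
Local Notation blocks := {ffun 'I_N.+1 -> {set 'I_N.+1}}.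

Definition good_antichains i : {set {set 'I_N.+1}} :=
  [set A | [&& antichainM l A, [forall x in A, x <= i],
              [forall x in A, i < q * x] & #|A| == max_antichain_size l i]].

Definition widen_set i (le_iN : i <= N) (A : {set 'I_i.+1}) : {set 'I_N.+1} :=
  [set widen_ord (n := i.+1) (m := N.+1) le_iN x | x in A].

Lemma widen_top_antichain i (le_iN : i <= N) A :
  A \in top_antichains l i -> widen_set le_iN A \in good_antichains i.
Proof.
rewrite !inE => /and3P[/andP[inA antiA] /eqP cardA aboveA].
rewrite card_imset ?cardA ?eqxx ?andbT; last exact: widen_ord_inj.
apply/and3P; split; [apply/andP; split | |];
  apply/forallP => w; apply/implyP => /imsetP[x xA ->] /=.
- exact: (implyP (forallP inA x) xA).
- apply/forallP => w'; apply/implyP => /imsetP[y yA ->]; apply/implyP => ne_xy.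
  have ne_xy' : x != y by apply: contraNneq ne_xy => ->.
  exact: implyP (implyP (forallP (implyP (forallP antiA x) xA) y) yA) ne_xy'.
- by rewrite -ltnS.
- exact: (implyP (forallP aboveA x) xA).
Qed.

Lemma r'_leq_good_antichains i : i <= N -> r' l i <= #|good_antichains i|.
Proof.
move=> le_iN; rewrite r'E -(card_imset _ (imset_inj (@widen_ord_inj i.+1 N.+1 le_iN))).
apply/subset_leq_card/subsetP => _ /imsetP[A topA ->].
exact: widen_top_antichain.
Qed.

Definition block_choices (b : 'I_N.+1) : {set {set 'I_N.+1}} :=
  if pi^'.-nat b then good_antichains (N %/ b) else [set set0].

Definition families : {set blocks} :=
  [set F | F \in family block_choices].

Lemma card_families : #|families| = \prod_b #|block_choices b|.
Proof.
rewrite cardsE card_family /image_mem foldrE big_map big_enum.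
by apply: eq_bigl => b; rewrite inE.
Qed.

Lemma family_blockP F (b : 'I_N.+1) : F \in families ->
  if pi^'.-nat b then F b \in good_antichains (N %/ b) else F b == set0.
Proof.
rewrite inE => /familyP/(_ b); rewrite /block_choices.
by case: ifP => // _; rewrite inE.
Qed.

Lemma mem_family_block F (b a : 'I_N.+1) : F \in families -> a \in F b ->
  [/\ pi^'.-nat b, pi.-nat a, a * b <= N & N < q * (a * b)].
Proof.
move=> /(family_blockP b); case: ifP => [pb | _ /eqP->]; last by rewrite inE.
rewrite inE => /and4P[/andP[inFb _] leFb aboveFb _] aFb; have b_gt0 := pnat_gt0 pb.
split => //; first exact: implyP (forallP inFb a) aFb.
  by rewrite -leq_divRL // (implyP (forallP leFb a) aFb).
by rewrite mulnA -ltn_divLR // (implyP (forallP aboveFb a) aFb).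
Qed.

Lemma card_family_block F (b : 'I_N.+1) : F \in families ->
  #|F b| = if pi^'.-nat b then max_antichain_size l (N %/ b) else 0.
Proof.
move=> /(family_blockP b); case: ifP => _ => [|/eqP->]; last by rewrite cards0.
by rewrite inE => /and4P[_ _ _ /eqP].
Qed.

Definition block_pairs (F : blocks) : {set 'I_N.+1 * 'I_N.+1} :=
  [set ba | ba.2 \in F ba.1].

Definition glue (F : blocks) : {set 'I_N.+1} :=
  [set (inord (ba.2 * ba.1) : 'I_N.+1) | ba : 'I_N.+1 * 'I_N.+1 in block_pairs F].

Lemma glue_inordK F (b a : 'I_N.+1) : F \in families -> a \in F b ->
  (inord (a * b) : 'I_N.+1) = a * b :> nat.
Proof. by move=> famF /(mem_family_block famF)[_ _ le_abN _]; rewrite inordK. Qed.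

Lemma mem_glue (F : blocks) (b a : 'I_N.+1) : a \in F b -> inord (a * b) \in glue F.
Proof. by move=> aFb; apply/imsetP; exists (b, a); rewrite ?inE. Qed.

Lemma glue_memP F (m : 'I_N.+1) : F \in families -> m \in glue F ->
  exists b a, a \in F b /\ m = a * b :> nat.
Proof.
move=> famF /imsetP[[b a]]; rewrite inE /= => aFb ->.
by exists b, a; rewrite (glue_inordK famF aFb).
Qed.

Lemma card_glue F : F \in families -> #|glue F| = \sum_b #|F b|.
Proof.
move=> famF; rewrite card_in_imset => [|[b a] [b' a']]; last first.
  rewrite !inE /= => aFb aFb' /(congr1 val).
  rewrite /= (glue_inordK famF aFb) (glue_inordK famF aFb').
  have [pb pa _ _] := mem_family_block famF aFb.
  have [pb' pa' _ _] := mem_family_block famF aFb'.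
  by case/(pnat_mul_inj pa pb pa' pb') => /val_inj-> /val_inj->.
rewrite -sum1_card (eq_bigl (fun ba => ba.2 \in F ba.1)) => [|ba]; last by rewrite inE.
rewrite -(pair_big_dep xpredT (fun b a => a \in F b) (fun _ _ => 1)) /=.
by apply: eq_bigr => b _; rewrite sum1_card.
Qed.

Lemma glue_above F : F \in families -> [forall x in glue F, N < q * x].
Proof.
move=> famF; apply/forallP => x; apply/implyP => /(glue_memP famF)[b [a [aFb ->]]].
by case: (mem_family_block famF aFb).
Qed.

Lemma glue_dvdn_eq F (x y : 'I_N.+1) :
  F \in families -> x \in glue F -> y \in glue F -> (x : nat) %| y -> x = y.
Proof.
move=> famF /(glue_memP famF)[b [a [aFb xE]]] /(glue_memP famF)[b' [a' [aFb' yE]]].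
have [pb pa _ above] := mem_family_block famF aFb.
have [pb' pa' _ _] := mem_family_block famF aFb'.
rewrite xE yE => /(pnat_mul_dvdn pa pb pa' pb')[dv_a dv_b].
have [eq_bb' | ne_bb'] := eqVneq b b'.
  suff eq_aa' : a = a' by apply: val_inj; rewrite /= xE yE eq_aa' eq_bb'.
  move: aFb'; rewrite -{}eq_bb' => aFb'; apply: contraTeq dv_a => ne_aa'.
  have /(family_blockP b) := famF; rewrite pb inE => /and4P[/andP[_ antiFb] _ _ _].
  exact: implyP (implyP (forallP (implyP (forallP antiFb a) aFb) a') aFb') ne_aa'.
have [c b'E] := dvdnP dv_b.
have pc : pi^'.-nat c by apply: pnat_dvd pb'; rewrite b'E dvdn_mulr.
have c_gt1 : 1 < c.
  case: c b'E pc => [|[|c]] b'E pc //.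
  by case/eqP: ne_bb'; apply: val_inj; rewrite /= b'E mul1n.
have le_xy : q * (a * b) <= a' * b'.
  rewrite b'E mulnCA !mulnA leq_mul2r; apply/orP; right.
  exact: leq_mul (dvdn_leq (pnat_gt0 pa') dv_a) (firstp'_nat_ge pc c_gt1).
have := ltn_ord y; rewrite ltnS yE => le_yN.
by move: (leq_trans above (leq_trans le_xy le_yN)); rewrite ltnn.
Qed.

Lemma glue_primitive F : F \in families -> primitive_set (glue F).
Proof.
move=> famF; apply/andP; split; apply/forallP => x; apply/implyP => xF.
  have [b [a [aFb ->]]] := glue_memP famF xF.
  have [pb pa _ _] := mem_family_block famF aFb.
  by rewrite muln_gt0 (pnat_gt0 pa) (pnat_gt0 pb).
apply/forallP => y; apply/implyP => yF; apply/implyP; apply: contra.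
by move/(glue_dvdn_eq famF xF yF)->.
Qed.

Lemma glue_inj : {in families &, injective glue}.
Proof.
have sub F G (b a : 'I_N.+1) : F \in families -> G \in families -> glue F = glue G ->
    a \in F b -> a \in G b.
  move=> famF famG eqFG aFb; have [pb pa _ _] := mem_family_block famF aFb.
  have := mem_glue aFb; rewrite eqFG => /(glue_memP famG)[b' [a' [aGb' e]]].
  have [pb' pa' _ _] := mem_family_block famG aGb'.
  rewrite (glue_inordK famF aFb) in e.
  by case: (pnat_mul_inj pa pb pa' pb' e) => /val_inj-> /val_inj->.
move=> F G famF famG eqFG; apply/ffunP => b; apply/setP => a.
by apply/idP/idP; [apply: sub famF famG eqFG | apply: sub famG famF (esym eqFG)].
Qed.

End Gluing.

Section UpperFamily.

Variables (l N : nat).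
Hypothesis l_gt0 : 0 < l.
Local Notation pi := (firstp l).

Definition upper_family : {ffun 'I_N.+1 -> {set 'I_N.+1}} :=
  [ffun b : 'I_N.+1 => if pi^'.-nat b then widen_set (leq_div N b) (upper_half l (N %/ b))
                       else set0].

Lemma upper_family_in : upper_family \in families l N.
Proof.
rewrite inE; apply/familyP => b; rewrite /block_choices ffunE.
by case: ifP => _; [apply/widen_top_antichain/upper_half_top | rewrite inE].
Qed.

Lemma glue_upper_family : glue upper_family = [set m : 'I_N.+1 | N < 2 * m].
Proof.
apply/setP => m; rewrite inE; apply/idP/idP.
  case/(glue_memP upper_family_in) => b [a []]; rewrite ffunE.
  case: ifP => [pb | _]; last by rewrite inE.
  case/imsetP => x; rewrite inE => /andP[_ lt_Nb_2x] -> ->.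
  by rewrite /= mulnA -ltn_divLR // (pnat_gt0 pb).
move=> lt_N_2m; have m_gt0 : 0 < m by lia.
have mE := partnC pi m_gt0.
have le_m_N : (m : nat) <= N by rewrite -ltnS.
have le_bm : m`_pi^' <= m by rewrite dvdn_leq // -{2}mE dvdn_mull.
have le_am : m`_pi <= m by rewrite dvdn_leq // -{2}mE dvdn_mulr.
pose bo : 'I_N.+1 := inord m`_pi^'; pose ao : 'I_N.+1 := inord m`_pi.
have boE : (bo : nat) = m`_pi^' by rewrite inordK // ltnS (leq_trans le_bm).
have aoE : (ao : nat) = m`_pi by rewrite inordK // ltnS (leq_trans le_am).
have b_gt0 : 0 < bo by rewrite boE part_gt0.
have lt_ao : ao < (N %/ bo).+1 by rewrite ltnS leq_divRL // aoE boE mE.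
suff -> : m = inord (ao * bo).
  have pbo : pi^'.-nat bo by rewrite boE part_pnat.
  apply: mem_glue; rewrite ffunE pbo.
  apply/imsetP; exists (Ordinal lt_ao); last exact: val_inj.
  by rewrite inE /= aoE part_pnat /= ltn_divLR // -mulnA boE mE.
by apply: val_inj; rewrite /= inordK aoE boE mE.
Qed.

Lemma card_glue_family F : F \in families l N ->
  #|glue F| = #|[set m : 'I_N.+1 | N < 2 * m]|.
Proof.
move=> famF; rewrite -glue_upper_family (card_glue famF) (card_glue upper_family_in).
apply: eq_bigr => b _.
by rewrite (card_family_block b famF) (card_family_block b upper_family_in).
Qed.

End UpperFamily.

Lemma card_upper_half_ord n : #|[set m : 'I_(n.*2).+1 | n.*2 < 2 * m]| = n.
Proof.
rewrite -sum1_card (eq_bigl (fun m : 'I_(n.*2).+1 => n < m)) => [|m]; last first.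
  by rewrite inE mul2n ltn_double.
rewrite big_mkcond -(big_mkord xpredT (fun m => if n < m then 1 else 0)) /=.
rewrite (big_cat_nat (n := n.+1)) //=; last by rewrite ltnS -addnn leq_addr.
rewrite big1_seq => [|m]; last first.
  by rewrite mem_iota add0n ltnS => /andP[_ /andP[_ le_mn]]; rewrite ltnNge le_mn.
rewrite add0n (eq_big_nat _ _ (F2 := fun _ => 1)) => [|m /andP[lt_nm _]]; last by rewrite lt_nm.
by rewrite sum_nat_const_nat muln1 subSS -addnn addnK.
Qed.

Lemma prod_r'_leq_fqP l n : 0 < l ->
  \prod_(b : 'I_(n.*2).+1 | (firstp l)^'.-nat b) r' l (n.*2 %/ b) <= fqP (nthp l) n.
Proof.
move=> l_gt0; apply: (@leq_trans #|families l n.*2|).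
  rewrite card_families big_mkcond /=; apply: leq_prod => b _.
  rewrite /block_choices; case: ifP => _; last by rewrite cards1.
  exact/r'_leq_good_antichains/leq_div.
rewrite -(card_in_imset (@glue_inj l n.*2)).
apply/subset_leq_card/subsetP => _ /imsetP[F famF ->].
rewrite inE (glue_primitive famF) (card_glue_family l_gt0 famF) card_upper_half_ord eqxx.
exact: glue_above.
Qed.

Lemma fqP_leq_fP q n : (fqP q n <= fP n)%N.
Proof.
apply/subset_leq_card/subsetP => A; rewrite !inE => /and3P[-> -> _].
by apply/forallP => x; apply/implyP.
Qed.

Lemma prod_by_value N (P : pred 'I_N.+1) (f : nat -> nat) (g : 'I_N.+1 -> nat) K :
  \prod_(b | P b && (0 < g b <= K)) f (g b) =
  \prod_(i < K) f i.+1 ^ #|[pred b | P b && (g b == i.+1)]|.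
Proof.
elim: K => [|K IHK].
  by rewrite big_ord0 big_pred0 // => b; case: (g b) => [|x]; rewrite ?andbF //= ltn0 andbF.
rewrite big_ord_recr /= -IHK (bigID (fun b => g b == K.+1)) /= mulnC.
congr (_ * _).
  apply: eq_bigl => b; case: (P b) => //=.
  case: (eqVneq (g b) K.+1) => [->|ne] /=; first by rewrite ltnn andbF.
  by rewrite andbT [g b <= _]leq_eqVlt (negbTE ne) /= ltnS.
rewrite -prod_nat_const; apply: eq_big => [b|b /andP[_ /eqP ->]] //.
by rewrite inE; case: (P b); case: (eqVneq (g b) K.+1) => [->|ne]; rewrite ?andbF ?andbT ?ltnSn.
Qed.

Lemma leq_prod_subcond I (r : seq I) (P Q : pred I) (E : I -> nat) :
  (forall i, P i -> 0 < E i) ->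
  \prod_(i <- r | P i && Q i) E i <= \prod_(i <- r | P i) E i.
Proof.
move=> E_gt0; rewrite [X in _ <= X](bigID Q) /= -[X in X <= _]muln1 leq_mul2l.
by rewrite prodn_cond_gt0 ?orbT // => i /andP[/E_gt0].
Qed.

Definition quot_count l N i :=
  #|[pred b : 'I_N.+1 | (firstp l)^'.-nat b && (N %/ b == i)]|.

Lemma prod_r'_quot_count_leq_fqP l n K : 0 < l ->
  \prod_(i < K) r' l i.+1 ^ quot_count l n.*2 i.+1 <= fqP (nthp l) n.
Proof.
move=> l_gt0; apply: leq_trans (prod_r'_leq_fqP n l_gt0).
rewrite /quot_count -(prod_by_value _ (r' l) (fun b => n.*2 %/ b)).
by apply: leq_prod_subcond => i _; apply: r'_gt0.
Qed.

Definition primorial l := \prod_(j < l) nthp j.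

Lemma primorial_gt0 l : 0 < primorial l.
Proof. by rewrite prodn_gt0 // => j; rewrite ltnW ?nthp_gt1. Qed.

Lemma primorial_pnat l : (firstp l).-nat (primorial l).
Proof.
rewrite /primorial; elim/big_rec: _ => // j x _ px.
by rewrite pnatM px andbT pnatE ?nthp_prime ?nthp_firstp.
Qed.

Lemma firstp'_nat_coprime l b : 0 < b -> (firstp l)^'.-nat b = coprime b (primorial l).
Proof.
move=> b_gt0; apply/idP/idP => [pb | cop_b].
  by rewrite coprime_sym (pnat_coprime (primorial_pnat l) pb).
apply/pnatP => // p pp dv_pb; rewrite inE /=; apply/hasP => -[j].
rewrite mem_iota add0n => /andP[_ lt_jl] /eqP pE.
have dv_pP : p %| primorial l by rewrite pE /primorial (bigD1 (Ordinal lt_jl)) //= dvdn_mulr.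
have : p %| gcdn b (primorial l) by rewrite dvdn_gcd dv_pb.
rewrite (eqP cop_b) dvdn1 => /eqP p1.
by rewrite p1 in pp.
Qed.

Lemma sum_coprime_block P x : 0 < P -> \sum_(x <= d < x + P) coprime d P = totient P.
Proof.
move=> P_gt0; elim: x => [|x IHx].
  by rewrite add0n totient_count_coprime; apply: eq_bigr => d _; rewrite coprime_sym.
have shift : coprime (x + P) P = coprime x P by rewrite /coprime gcdnC gcdnDr gcdnC.
have peel_first : \sum_(x <= d < (x + P).+1) coprime d P =
    coprime x P + \sum_(x.+1 <= d < (x + P).+1) coprime d P.
  by rewrite big_ltn // ltnS leq_addr.
have peel_last : \sum_(x <= d < (x + P).+1) coprime d P =
    \sum_(x <= d < x + P) coprime d P + coprime (x + P) P.
  by rewrite big_nat_recr // leq_addr.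
rewrite addSn; lia.
Qed.

Lemma sum_coprime_blocks P x k : 0 < P ->
  \sum_(x <= d < x + k * P) coprime d P = k * totient P.
Proof.
move=> P_gt0; elim: k => [|k IHk]; first by rewrite mul0n addn0 big_geq.
have -> : x + k.+1 * P = x + k * P + P by rewrite mulSn [P + _]addnC addnA.
rewrite (big_cat_nat (n := x + k * P)) ?leq_addr //= IHk sum_coprime_block //.
by rewrite mulSn addnC.
Qed.

Lemma divn_eq_between N i b : 0 < i -> N %/ i.+1 < b -> b <= N %/ i -> N %/ b = i.
Proof.
move=> i_gt0 lt_b le_b; have b_gt0 : 0 < b by apply: leq_ltn_trans lt_b.
apply/eqP; rewrite eqn_leq -ltnS ltn_divLR // mulnC -ltn_divLR // lt_b.
by rewrite leq_divRL // mulnC -leq_divRL.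
Qed.

(* The [b] in [(N/(i+1), N/i]] coprime to the primorial all satisfy [N/b = i];
   count them in whole blocks of consecutive integers of length the primorial. *)
Lemma quot_count_ge l N i : 0 < i ->
  ((N %/ i - N %/ i.+1) %/ primorial l) * totient (primorial l) <= quot_count l N i.
Proof.
move=> i_gt0; set u := N %/ i.+1; set v := N %/ i; set P := primorial l.
set k := (v - u) %/ P; have P_gt0 : 0 < P := primorial_gt0 l.
have le_kP : k * P <= v - u by apply: leq_divM.
have le_uv : u <= v by rewrite leq_div2l.
have le_vN : v <= N by apply: leq_div.
rewrite /quot_count -sum1_card big_mkcond /=.
rewrite -(big_mkord xpredT (fun b => if (firstp l)^'.-nat b && (N %/ b == i) then 1 else 0)).
rewrite (big_cat_nat (n := u.+1)) //=; last by lia.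
rewrite (big_cat_nat (m := u.+1) (n := u.+1 + k * P)) //=; [|lia|lia].
rewrite -(sum_coprime_blocks u.+1 k P_gt0) addnCA; apply: leq_trans (leq_addr _ _).
apply/eq_leq/eq_big_nat => b /andP[lt_ub lt_b].
have le_bv : b <= v by lia.
rewrite firstp'_nat_coprime ?(divn_eq_between i_gt0 lt_ub le_bv) ?eqxx ?andbT; last lia.
by case: coprime.
Qed.

Lemma totient_leq n : totient n <= n.
Proof.
rewrite totient_count_coprime -[leqRHS]subn0 -[leqRHS]muln1 -sum_nat_const_nat.
by apply: leq_sum => d _; case: coprime.
Qed.

Local Open Scope R_scope.

Lemma INR_leq (a b : nat) : (a <= b)%N -> INR a <= INR b.
Proof. by move=> /leP; apply: le_INR. Qed.

Lemma INR_ltn (a b : nat) : (a < b)%N -> INR a < INR b.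
Proof. by move=> /ltP; apply: lt_INR. Qed.

Lemma INR_muln (a b : nat) : INR (a * b)%N = INR a * INR b.
Proof. by rewrite -multE mult_INR. Qed.

Lemma INR_addn (a b : nat) : INR (a + b)%N = INR a + INR b.
Proof. by rewrite -plusE plus_INR. Qed.

Lemma INR_expn (a b : nat) : INR (a ^ b)%N = INR a ^ b.
Proof. by elim: b => [|b IHb] //; rewrite expnS INR_muln IHb. Qed.

Lemma totient_primorial l : INR (totient (primorial l)) = INR (primorial l) * euler_factor l.
Proof.
elim: l => [|l IHl]; first by rewrite /primorial big_ord0 /= Rmult_1_r.
have cop : coprime (primorial l) (nthp l).
  rewrite coprime_sym -firstp'_nat_coprime ?pnatE ?nthp_prime //.
    by rewrite inE /= nthp_notin_firstp.
  exact: ltnW (nthp_gt1 l).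
rewrite /primorial big_ord_recr -/(primorial l) /= totient_coprime //.
rewrite (totient_prime (nthp_prime l)) !INR_muln IHl.
rewrite /euler_factor /= -/(euler_factor l) subn1 /=.
have p_gt0 : (0 < nthp l)%N by apply: ltnW (nthp_gt1 l).
have predE : INR (nthp l).-1 = INR (nthp l) - 1 by rewrite -{2}(prednK p_gt0) S_INR; lra.
by rewrite predE; field; apply: not_0_INR; lia.
Qed.

Lemma floor_block_bound (phi P k v u i N : R) :
  0 <= phi <= P -> 1 <= P -> 1 <= i ->
  v - u < (k + 1) * P -> N < (v + 1) * i -> u * (i + 1) <= N ->
  N * (phi / P) / (i * (i + 1)) - 2 * P <= k * phi.
Proof.
move=> [phi_ge0 phi_leP] P_ge1 i_ge1 lt_vu lt_N le_N.
have N_split : N / (i * (i + 1)) = N / i - N / (i + 1) by field; lra.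
have lt_Ni : N / i < v + 1.
  by apply: (Rmult_lt_reg_r i); [lra | rewrite /Rdiv Rmult_assoc Rinv_l; lra].
have le_Ni1 : u <= N / (i + 1).
  by apply: (Rmult_le_reg_r (i + 1)); [lra | rewrite /Rdiv Rmult_assoc Rinv_l; lra].
set e := phi / P.
have e_ge0 : 0 <= e by apply: Rmult_le_pos; [lra | left; apply: Rinv_0_lt_compat; lra].
have e_le1 : e <= 1.
  by apply: (Rmult_le_reg_r P); [lra | rewrite /e /Rdiv Rmult_assoc Rinv_l; lra].
have phiE : phi = P * e by rewrite /e; field; lra.
have -> : N * e / (i * (i + 1)) = (N / i - N / (i + 1)) * e by rewrite -N_split; field; lra.
rewrite phiE; nra.
Qed.

Lemma quot_count_real l N i : (0 < i)%N ->
  INR N * euler_factor l / (INR i * (INR i + 1)) - 2 * INR (primorial l) <=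
  INR (quot_count l N i).
Proof.
move=> i_gt0; set P := primorial l; set u := (N %/ i.+1)%N; set v := (N %/ i)%N.
set k := ((v - u) %/ P)%N; have P_gt0 : (0 < P)%N := primorial_gt0 l.
have P_ge1 : 1 <= INR P by apply: (INR_leq P_gt0).
have -> : euler_factor l = INR (totient P) / INR P by rewrite totient_primorial -/P; field; lra.
apply: Rle_trans (INR_leq (quot_count_ge l N i_gt0)); rewrite INR_muln.
apply: (floor_block_bound (v := INR v) (u := INR u)) => //.
- by split; [apply: pos_INR | apply/INR_leq/totient_leq].
- by apply: (INR_leq i_gt0).
- have := INR_ltn (ltn_ceil (v - u) P_gt0).
  rewrite INR_muln S_INR -minusE minus_INR //; apply/leP; exact: leq_div2l.
- by have := INR_ltn (ltn_ceil N i_gt0); rewrite INR_muln S_INR.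
- by have := INR_leq (leq_divM N i.+1); rewrite INR_muln S_INR.
Qed.

Lemma prodR1_INR (f : nat -> nat) K :
  INR (\prod_(i < K) f i.+1)%N = prodR1 (fun i => INR (f i)) K.
Proof. by elim: K => [|K IHK]; rewrite ?big_ord0 // big_ord_recr INR_muln IHK. Qed.

Lemma prodR1_mul f g K : prodR1 f K * prodR1 g K = prodR1 (fun i => f i * g i) K.
Proof. by elim: K => [|K IHK] /=; [lra | rewrite -IHK; ring]. Qed.

Lemma prodR1_pow f K n : prodR1 f K ^ n = prodR1 (fun i => f i ^ n) K.
Proof. by elim: K => [|K IHK] /=; [rewrite pow1 | rewrite Rpow_mult_distr IHK]. Qed.

Lemma prodR1_ge0 f K : (forall i, 0 <= f i) -> 0 <= prodR1 f K.
Proof. by move=> f_ge0; elim: K => [|K IHK] /=; [lra | apply: Rmult_le_pos]. Qed.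

Lemma prodR1_le f g K : (forall i, 0 <= f i) ->
  (forall i, (1 <= i <= K)%N -> f i <= g i) -> prodR1 f K <= prodR1 g K.
Proof.
move=> f_ge0; elim: K => [|K IHK] le_fg /=; first lra.
apply: Rmult_le_compat; [exact: prodR1_ge0 | exact: f_ge0 | | by apply: le_fg; rewrite leqnn].
by apply: IHK => i /andP[i_ge1 le_iK]; apply: le_fg; rewrite i_ge1 leqW.
Qed.

Lemma rpow0_pow_leq (r w D : R) (n c : nat) : 1 <= r -> w * INR n - D <= INR c ->
  rpow0 r w ^ n <= r ^ c * Rpower r D.
Proof.
move=> r_ge1 le_c; rewrite /rpow0; destruct (Req_EM_T r 0) as [r0|r_ne0]; first lra.
rewrite -Rpower_pow ?Rpower_mult; last by apply: exp_pos.
rewrite -(Rpower_pow c) -?Rpower_plus; last lra.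
by apply: Rle_Rpower => //; lra.
Qed.

(* Absorbs the error [2 * primorial l] of [quot_count_real] for each [i <= K]. *)
Definition slack l K := prodR1 (fun i => Rpower (INR (r' l i)) (2 * INR (primorial l))) K.

Lemma slack_gt0 l K : 0 < slack l K.
Proof.
rewrite /slack; elim: K => [|K IHK] /=; first lra.
by apply: Rmult_lt_0_compat => //; apply: exp_pos.
Qed.

Lemma c'_pow_leq_fqP l n K : (0 < l)%N ->
  c' l K ^ n <= INR (fqP (nthp l) n) * slack l K.
Proof.
move=> l_gt0; apply: Rle_trans (Rmult_le_compat_r _ _ _ (Rlt_le _ _ (slack_gt0 l K))
  (INR_leq (prod_r'_quot_count_leq_fqP n K l_gt0))).
rewrite (prodR1_INR (fun i => r' l i ^ quot_count l n.*2 i)%N).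
rewrite /slack prodR1_mul /c' prodR1_pow.
apply: prodR1_le => [i | i /andP[i_ge1 _]].
  rewrite /rpow0; destruct (Req_EM_T (INR (r' l i)) 0); apply: pow_le; first lra.
  exact/Rlt_le/exp_pos.
have r_ge1 : 1 <= INR (r' l i) by apply: (INR_leq (r'_gt0 i l_gt0)).
rewrite INR_expn; apply: rpow0_pow_leq => //.
have := quot_count_real l n.*2 i_ge1; rewrite -addnn INR_addn.
have i_pos : 1 <= INR i by apply: (INR_leq i_ge1).
suff -> : (INR n + INR n) * euler_factor l / (INR i * (INR i + 1)) =
          2 / (INR i * (INR i + 1)) * euler_factor l * INR n by [].
field; lra.
Qed.

Lemma pow_mul_leq_eventually x y D : 0 < x < y ->
  exists N0, forall n, (N0 <= n)%N -> x ^ n * D <= y ^ n.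
Proof.
move=> [x_gt0 lt_xy]; have y_gt0 : 0 < y by lra.
have c_gt0 : 0 < Rabs D + 1 by have := Rabs_pos D; lra.
have ratio_ge0 : 0 <= x / y by apply/Rlt_le/Rdiv_lt_0_compat.
have ratio_lt1 : Rabs (x / y) < 1.
  rewrite Rabs_right; last exact: Rle_ge.
  by apply: (Rmult_lt_reg_r y) => //; rewrite /Rdiv Rmult_assoc Rinv_l; lra.
have [N0 small] := pow_lt_1_zero (x / y) ratio_lt1 _ (Rinv_0_lt_compat _ c_gt0).
exists N0 => n /leP /small; rewrite Rabs_right; last exact/Rle_ge/pow_le.
rewrite /Rdiv Rpow_mult_distr pow_inv => small_n.
have yn_gt0 : 0 < y ^ n by apply: pow_lt.
have xn_ge0 : 0 <= x ^ n by apply: pow_le; lra.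
have lt_xn : x ^ n * (Rabs D + 1) < y ^ n.
  have lhsE : x ^ n * (Rabs D + 1) = x ^ n * / y ^ n * (y ^ n * (Rabs D + 1)) by field; lra.
  have rhsE : y ^ n = / (Rabs D + 1) * (y ^ n * (Rabs D + 1)) by field; lra.
  rewrite lhsE {3}rhsE; apply: Rmult_lt_compat_r => //; exact: Rmult_lt_0_compat.
apply: Rle_trans (Rlt_le _ _ lt_xn); apply: Rmult_le_compat_l => //.
by have := Rle_abs D; lra.
Qed.

Lemma fqP_pow_eventually l K eps : (0 < l)%N -> 0 < eps ->
  exists N0, forall n, (N0 <= n)%N -> 0 < c' l K - eps ->
    (c' l K - eps) ^ n <= INR (fqP (nthp l) n).
Proof.
move=> l_gt0 eps_gt0; case: (Rlt_dec 0 (c' l K - eps)) => [c_gt0 | c_le0]; last first.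
  by exists 0%N => n _ /c_le0.
have lt_c : c' l K - eps < c' l K by lra.
have [N0 pow_leq] := pow_mul_leq_eventually (slack l K) (conj c_gt0 lt_c).
exists N0 => n le_N0n _; apply: (Rmult_le_reg_r (slack l K)); first exact: slack_gt0.
exact: Rle_trans (pow_leq n le_N0n) (c'_pow_leq_fqP n K l_gt0).
Qed.

Lemma Rpower_inv_ge x a n : 0 < x -> (0 < n)%N -> x ^ n <= a -> x <= Rpower a (/ INR n).
Proof.
move=> x_gt0 n_gt0 le_xn_a; have n_pos : 0 < INR n by apply: (INR_ltn n_gt0).
have -> : x = Rpower (x ^ n) (/ INR n).
  by rewrite -Rpower_pow // Rpower_mult Rinv_r ?Rpower_1 //; lra.
apply: Rle_Rpower_l; first exact/Rlt_le/Rinv_0_lt_compat.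
by split; [apply: pow_lt | ].
Qed.

Theorem mainTheorem5 (l K : nat) (hl : (1 <= l)%N) (hK : (1 <= K)%N) :
  (forall eps : R, Rlt 0 eps ->
     exists N : nat, forall n : nat, (N <= n)%N ->
       (fqP (nthp l) n <= fP n)%N /\
       (Rlt 0 (Rminus (c' l K) eps) ->
          Rle (pow (Rminus (c' l K) eps) n) (INR (fqP (nthp l) n)))) /\
  (forall eps : R, Rlt 0 eps ->
     exists N : nat, forall n : nat, (N <= n)%N ->
       Rle (Rminus (c' l K) eps) (Rpower (INR (fP n)) (Rinv (INR n)))).
Proof.
(* The argument does not use [hK]. *)
split=> eps eps_gt0; have [N0 fq_bound] := fqP_pow_eventually K hl eps_gt0.
  by exists N0 => n le_N0n; split; [apply: fqP_leq_fP | apply: fq_bound].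
case: (Rlt_dec 0 (c' l K - eps)) => [c_gt0 | c_le0]; last first.
  by exists 0%N => n _; rewrite /Rpower; have := exp_pos (/ INR n * ln (INR (fP n))); lra.
exists (maxn N0 1) => n; rewrite geq_max => /andP[le_N0n n_gt0].
apply: Rpower_inv_ge => //.
exact: Rle_trans (fq_bound n le_N0n c_gt0) (INR_leq (fqP_leq_fP _ _)).
Qed.
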